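(* Let $\mathcal V$ be a variety with a difference term $d$, $A\in\mathcal V$, and $\alpha\in\operatorname{Con}A$ with $[\alpha,1_A]=0$. Let $r$ be an $\alpha$-trace, $B=A(\alpha)/\Delta_{\alpha1}$ with $x+y:=d^B(x,0,y)$ where $0$ is the $\Delta_{\alpha1}$-class of the diagonal, and $T_f(x_1/\alpha,\dots,x_n/\alpha)=\big(r(f(\bar x)),f(r(x_1),\dots,r(x_n))\big)/\Delta_{\alpha1}$ for each basic $f$ of arity $n$. Then $A\cong B\otimes^{T}A/\alpha$.
   Context: All algebras are in the sense of universal algebra. For $\alpha,\beta\in\operatorname{Con}A$, $[\alpha,\beta]$ is the term-condition (TC) commutator; $1_A$ is the total relation. $A(\alpha)=\{(x,y)\in A\times A:(x,y)\in\alpha\}$ is $\alpha$ viewed as a subalgebra of $A\times A$; $\Delta_{\alpha\beta}$ is the congruence of $A(\alpha)$ generated by $\{((u,u),(v,v)):(u,v)\in\beta\}$. An $\alpha$-trace is a map $r:A\to A$ with $(r(x),x)\in\alpha$ for all $x$ and $r(x)=r(y)$ whenever $(x,y)\in\alpha$. A difference term for $\mathcal V$ is a ternary term $d$ such that for every $A\in\mathcal V$, $\theta\in\operatorname{Con}A$, $(a,b)\in\theta$: $d(a,a,b)=b$ and $(d(a,b,b),a)\in[\theta,\theta]$. Given algebras $B,Q$ in the same signature $\tau$, a binary operation $+$ on $B$, and maps $T_f:Q^{\operatorname{ar}f}\to B$ ($f\in\tau$), the algebra $B\otimes^{T}Q$ has universe $B\times Q$ and operations $F_f((b_1,q_1),\dots,(b_n,q_n))=\big(f^B(b_1,\dots,b_n)+T_f(q_1,\dots,q_n),\,f^Q(q_1,\dots,q_n)\big)$.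 *)

From Stdlib Require Import ClassicalEpsilon.
From mathcomp Require Import all_boot.
Unset Printing Implicit Defensive.

Record signature := Signature { sym : Type; arity : sym -> nat }.
Arguments arity {s} _.

Record algebra (s : signature) := Algebra {
  carrier :> Type;
  op : forall f : sym s, ('I_(arity f) -> carrier) -> carrier }.
Arguments Algebra {s} carrier op.
Arguments op {s} a f _ : rename.
Arguments carrier {s} a : rename.

Inductive term (s : signature) (V : Type) : Type :=
| Var : V -> term s V
| App : forall f : sym s, ('I_(arity f) -> term s V) -> term s V.
Arguments Var {s V} _. Arguments App {s V} f _.

Fixpoint eval (s : signature) (A : algebra s) (V : Type) (e : V -> A) (t : term s V) : A :=
  match t with
  | Var v => e v
  | App f ts => op A f (fun i => @eval s A V e (ts i))
  end.
Arguments eval {s} A {V} e t.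


(** A satisfies every identity (p, q) in the set Sigma: this is membership
    in the variety Mod(Sigma). *)
Definition models (s : signature) (A : algebra s)
  (Sigma : term s nat -> term s nat -> Prop) : Prop :=
  forall p q, Sigma p q -> forall e : nat -> A, eval A e p = eval A e q.
Arguments models {s} A Sigma.

Definition is_congruence (s : signature) (A : algebra s) (th : A -> A -> Prop) : Prop :=
  (forall x, th x x) /\ (forall x y, th x y -> th y x) /\
  (forall x y z, th x y -> th y z -> th x z) /\
  (forall f (xs ys : 'I_(arity f) -> A),
      (forall i, th (xs i) (ys i)) -> th (op A f xs) (op A f ys)).
Arguments is_congruence {s} A th.

Definition total_rel (T : Type) : T -> T -> Prop := fun _ _ => True.
Arguments total_rel {T} _ _.

Definition Cg (s : signature) (C : algebra s) (S : C -> C -> Prop) (x y : C) : Prop :=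
  forall th, is_congruence C th -> (forall a b, S a b -> th a b) -> th x y.
Arguments Cg {s} C S x y.

Definition sum_env (T : Type) m n (a : 'I_m -> T) (c : 'I_n -> T) : 'I_m + 'I_n -> T :=
  fun v => match v with inl i => a i | inr j => c j end.
Arguments sum_env {T m n} a c v.

Definition centralizes (s : signature) (A : algebra s) (al be de : A -> A -> Prop) : Prop :=
  forall m n (t : term s ('I_m + 'I_n)%type) (a b : 'I_m -> A) (c e : 'I_n -> A),
    (forall i, al (a i) (b i)) -> (forall j, be (c j) (e j)) ->
    de (eval A (sum_env a c) t) (eval A (sum_env a e) t) ->
    de (eval A (sum_env b c) t) (eval A (sum_env b e) t).
Arguments centralizes {s} A al be de.

Definition tc_comm (s : signature) (A : algebra s) (al be : A -> A -> Prop) (x y : A) : Prop :=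
  forall de, is_congruence A de -> centralizes A al be de -> de x y.
Arguments tc_comm {s} A al be x y.

Definition env3 (T : Type) (a b c : T) : 'I_3 -> T :=
  fun i => match nat_of_ord i with 0 => a | 1 => b | _ => c end.
Arguments env3 {T} a b c i.

Definition is_difference_term (s : signature) (A : algebra s) (d : term s 'I_3) : Prop :=
  forall th, is_congruence A th -> forall a b, th a b ->
    eval A (env3 a a b) d = b /\ tc_comm A th th (eval A (env3 a b b) d) a.
Arguments is_difference_term {s} A d.

Definition is_trace (s : signature) (A : algebra s) (al : A -> A -> Prop) (r : A -> A) : Prop :=
  (forall x, al (r x) x) /\ (forall x y, al x y -> r x = r y).
Arguments is_trace {s} A al r.

Definition quot_carrier (T : Type) (th : T -> T -> Prop) : Type :=
  {P : T -> Prop | exists a, P = th a}.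
Arguments quot_carrier {T} th.

Definition cls (T : Type) (th : T -> T -> Prop) (a : T) : quot_carrier th :=
  exist _ (th a) (ex_intro _ a erefl).
Arguments cls {T} th a.

Definition rep (T : Type) (th : T -> T -> Prop) (x : quot_carrier th) : T :=
  proj1_sig (constructive_indefinite_description _ (proj2_sig x)).
Arguments rep {T th} x.

Definition quot_alg (s : signature) (A : algebra s) (th : A -> A -> Prop) : algebra s :=
  Algebra (quot_carrier th) (fun f xs => cls th (op A f (fun i => rep (xs i)))).
Arguments quot_alg {s} A th.

Section CongAlg.
Variables (s : signature) (A : algebra s) (al : A -> A -> Prop).
Hypothesis Hal : is_congruence A al.

Definition cong_pairs : Type := {p : A * A | al p.1 p.2}.

Lemma cong_pairs_op_proof f (xs : 'I_(arity f) -> cong_pairs) :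
  al (op A f (fun i => (proj1_sig (xs i)).1)) (op A f (fun i => (proj1_sig (xs i)).2)).
Proof. case: Hal => _ [_ [_ Hc]]; apply: Hc => i; exact: (proj2_sig (xs i)). Qed.

Definition cong_alg : algebra s :=
  Algebra cong_pairs (fun f xs =>
    exist (fun p : A * A => al p.1 p.2)
      (op A f (fun i => (proj1_sig (xs i)).1), op A f (fun i => (proj1_sig (xs i)).2))
      (cong_pairs_op_proof f xs)).

Definition diag (a : A) : cong_pairs :=
  exist (fun p : A * A => al p.1 p.2) (a, a) (proj1 Hal a).

Definition Delta (be : A -> A -> Prop) : cong_alg -> cong_alg -> Prop :=
  Cg cong_alg (fun p q => exists u v, be u v /\
                 proj1_sig p = (u, u) /\ proj1_sig q = (v, v)).

Definition B_alg : algebra s := quot_alg cong_alg (Delta (@total_rel (carrier A))).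

Definition zeroB (a : A) : B_alg := cls (Delta (@total_rel (carrier A))) (diag a).

(** x + y := d^B(x, 0, y); the diagonal element used for 0 is taken from a
    representative of x (all diagonal pairs lie in one Delta_{alpha 1}-class). *)
Definition plusB (d : term s 'I_3) (x y : B_alg) : B_alg :=
  eval B_alg (env3 x (zeroB (proj1_sig (rep x)).1) y) d.

Variable r : A -> A.
Hypothesis Hr : is_trace A al r.

Lemma T_proof f (xs : 'I_(arity f) -> A) :
  al (r (op A f xs)) (op A f (fun i => r (xs i))).
Proof.
case: Hal => _ [Hsym [Htr Hc]]; case: Hr => Hr1 _.
apply: Htr (Hr1 _) _; apply: Hc => i; apply: Hsym; exact: Hr1.
Qed.

Definition T_map (f : sym s) (q : 'I_(arity f) -> quot_alg A al) : B_alg :=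
  cls (Delta (@total_rel (carrier A)))
    (exist (fun p : A * A => al p.1 p.2)
       (r (op A f (fun i => rep (q i))), op A f (fun i => r (rep (q i))))
       (T_proof f (fun i => rep (q i)))).

End CongAlg.
Arguments cong_pairs {s A} al.
Arguments cong_alg {s A al} Hal.
Arguments diag {s A al} Hal a.
Arguments Delta {s A al} Hal be _ _.
Arguments B_alg {s A al} Hal.
Arguments zeroB {s A al} Hal a.
Arguments plusB {s A al} Hal d x y.
Arguments T_map {s A al} Hal {r} Hr f q.

Definition tensor (s : signature) (B Q : algebra s) (plus : B -> B -> B)
  (T : forall f : sym s, ('I_(arity f) -> Q) -> B) : algebra s :=
  Algebra (carrier B * carrier Q)%type (fun f xs =>
    (plus (op B f (fun i => (xs i).1)) (T f (fun i => (xs i).2)),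
     op Q f (fun i => (xs i).2))).
Arguments tensor {s B Q} plus T.

Definition is_hom (s : signature) (A C : algebra s) (h : A -> C) : Prop :=
  forall f (xs : 'I_(arity f) -> A), h (op A f xs) = op C f (fun i => h (xs i)).
Arguments is_hom {s A C} h.

Definition isomorphic (s : signature) (A C : algebra s) : Prop :=
  exists h : A -> C, is_hom h /\ bijective h.
Arguments isomorphic {s} A C.

(** The isomorphism is  h(a) = ((r a, a)/Delta, a/alpha).  Everything rests on
    two consequences of the hypothesis [alpha, 1] = 0 for the difference term:
    d(y, x, x) = y for alpha-related x, y, and the term condition C(alpha, 1; 0).
    From these we derive a "transfer" identity moving d across a basic
    operation, which shows that the relation
        (x, y) R (x', y')  :<=>  d(y, x, z) = d(y', x', z) for all z
    is a congruence of A(alpha) containing the generators of Delta_{alpha 1};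
    hence Delta_{alpha 1} is contained in R, which gives injectivity of h.
    Conversely every pair (x, y) is Delta-related to (x', d(y, x, x')) for any
    x', which gives surjectivity. *)

From mathcomp Require Import all_boot.
From Stdlib Require Import ClassicalEpsilon FunctionalExtensionality.
From Stdlib Require Import PropExtensionality ProofIrrelevance.
Set Implicit Arguments.
Unset Strict Implicit.
Unset Printing Implicit Defensive.

(** Induction on terms: the generated principle is too weak because the
    subterms of [App f ts] are given by a function [ts]. *)
Definition term_ind' (s : signature) (V : Type) (P : term s V -> Prop)
  (HV : forall v, P (Var v))
  (HA : forall f ts, (forall i, P (ts i)) -> P (App f ts)) : forall t, P t :=
  fix F t := match t with Var v => HV v | App f ts => HA f ts (fun i => F (ts i)) end.

Fixpoint tsubst (s : signature) V W (t : term s V) (sg : V -> term s W) : term s W :=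
  match t with Var v => sg v | App f ts => App f (fun i => @tsubst s V W (ts i) sg) end.
Arguments tsubst {s V W} t sg.

Section TermEvaluation.
Variables (s : signature) (A : algebra s).

Lemma eval_compat (th : A -> A -> Prop) V (Hth : is_congruence A th)
  (e e' : V -> A) (t : term s V) :
  (forall v, th (e v) (e' v)) -> th (eval A e t) (eval A e' t).
Proof.
move=> He; elim/term_ind': t => [v|f ts IH] /=; first exact: He.
by case: Hth => _ [_ [_ Hc]]; apply: Hc.
Qed.

Lemma eval_subst V W (e : W -> A) (t : term s V) (sg : V -> term s W) :
  eval A e (tsubst t sg) = eval A (fun v => eval A e (sg v)) t.
Proof.
elim/term_ind': t => [v|f ts IH] //=.
by congr (op A f); apply: functional_extensionality => i; apply: IH.
Qed.

End TermEvaluation.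

Lemma env3_map (T U : Type) (g : T -> U) (a b c : T) :
  (fun i => g (env3 a b c i)) = env3 (g a) (g b) (g c).
Proof. by apply: functional_extensionality => i; rewrite /env3; case: (nat_of_ord i) => [|[|]]. Qed.

Lemma env3_rel (T : Type) (th : T -> T -> Prop) (a b c a' b' c' : T) :
  th a a' -> th b b' -> th c c' -> forall i, th (env3 a b c i) (env3 a' b' c' i).
Proof. by move=> Ha Hb Hc i; rewrite /env3; case: (nat_of_ord i) => [|[|]]. Qed.

Lemma sig_eq (T : Type) (P : T -> Prop) (p q : {x | P x}) :
  proj1_sig p = proj1_sig q -> p = q.
Proof. by case: p q => [x px] [y py] /= E; subst; rewrite (proof_irrelevance _ px py). Qed.

Lemma cls_rep (T : Type) (th : T -> T -> Prop) (x : quot_carrier th) : cls th (rep x) = x.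
Proof.
apply: sig_eq; rewrite /rep /=.
by case: constructive_indefinite_description => a0 /= ->.
Qed.

Section Quotients.
Variables (s : signature) (C : algebra s) (th : C -> C -> Prop).
Hypothesis Hth : is_congruence C th.

(** Classes of related elements coincide (this needs extensionality, since
    classes are predicates) and conversely. *)
Lemma cls_eq x y : th x y -> cls th x = cls th y.
Proof.
move=> Hxy; case: Hth => _ [Hs [Ht _]].
have E : th x = th y.
  apply: functional_extensionality => z; apply: propositional_extensionality.
  by split; [apply: Ht (Hs _ _ Hxy) | apply: Ht Hxy].
rewrite /cls; move: (ex_intro _ x _) (ex_intro _ y _); rewrite E => p q.
by rewrite (proof_irrelevance _ p q).
Qed.

Lemma cls_inv x y : cls th x = cls th y -> th x y.
Proof. by move/(f_equal (@proj1_sig _ _)) => /= ->; case: Hth. Qed.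

Lemma rep_cls x : th x (rep (cls th x)).
Proof. by rewrite /rep; case: constructive_indefinite_description => a0 /= ->; case: Hth. Qed.

Lemma op_quot f (xs : 'I_(arity f) -> C) :
  op (quot_alg C th) f (fun i => cls th (xs i)) = cls th (op C f xs).
Proof.
apply: cls_eq; case: Hth => _ [Hs [_ Hc]].
by apply: Hc => i; apply: Hs; apply: rep_cls.
Qed.

Lemma eval_quot V (e : V -> C) (t : term s V) :
  eval (quot_alg C th) (fun v => cls th (e v)) t = cls th (eval C e t).
Proof.
elim/term_ind': t => [v|f ts IH] //.
by rewrite -op_quot -(functional_extensionality _ _ IH).
Qed.

End Quotients.

Lemma Cg_cong (s : signature) (C : algebra s) (S : C -> C -> Prop) : is_congruence C (Cg C S).
Proof.
split; [|split; [|split]].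
- by move=> x th [Hr _] _; apply: Hr.
- by move=> x y H th Hth HS; case: (Hth) => _ [Hs _]; apply: Hs; apply: H.
- move=> x y z H1 H2 th Hth HS; case: (Hth) => _ [_ [Ht _]].
  exact: Ht (H1 _ Hth HS) (H2 _ Hth HS).
- move=> f xs ys H th Hth HS; case: (Hth) => _ [_ [_ Hc]].
  by apply: Hc => i; apply: H.
Qed.

Lemma total_cong (s : signature) (A : algebra s) : is_congruence A (@total_rel (carrier A)).
Proof. by split; [|split; [|split]]. Qed.

Lemma centralizes_antimono (s : signature) (A : algebra s) (al be be' de : A -> A -> Prop) :
  (forall x y, be' x y -> be x y) -> centralizes A al be de -> centralizes A al be' de.
Proof. by move=> Hbe Hc m n t a b c e Hab Hce; apply: Hc => // j; apply: Hbe. Qed.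

Lemma tc_comm_mono (s : signature) (A : algebra s) (al be be' : A -> A -> Prop) x y :
  (forall u v, be' u v -> be u v) -> tc_comm A al be' x y -> tc_comm A al be x y.
Proof. by move=> Hbe H de Hde Hc; apply: H => //; apply: centralizes_antimono Hc. Qed.

Section PairAlgebra.
Variables (s : signature) (A : algebra s) (al : A -> A -> Prop).
Hypothesis Hal : is_congruence A al.

Local Notation Delta1 := (Delta Hal (@total_rel (carrier A))).

Lemma eval_cong V (e : V -> cong_alg Hal) (t : term s V) :
  proj1_sig (eval (cong_alg Hal) e t) =
  (eval A (fun v => (proj1_sig (e v)).1) t, eval A (fun v => (proj1_sig (e v)).2) t).
Proof.
elim/term_ind': t => [v|f ts IH] /=; first by case: (proj1_sig (e v)).
by congr pair; congr (op A f); apply: functional_extensionality => i; rewrite IH.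
Qed.

Lemma eval_cong3 (t : term s 'I_3) (a b c : cong_alg Hal) :
  proj1_sig (eval (cong_alg Hal) (env3 a b c) t) =
  (eval A (env3 (proj1_sig a).1 (proj1_sig b).1 (proj1_sig c).1) t,
   eval A (env3 (proj1_sig a).2 (proj1_sig b).2 (proj1_sig c).2) t).
Proof.
by rewrite eval_cong (env3_map (fun p : cong_alg Hal => (proj1_sig p).1))
  (env3_map (fun p : cong_alg Hal => (proj1_sig p).2)).
Qed.

Lemma Delta_cong : is_congruence (cong_alg Hal) Delta1.
Proof. exact: Cg_cong. Qed.

Lemma Delta_diag u v : Delta1 (diag Hal u) (diag Hal v).
Proof. by move=> th Hth HS; apply: HS; exists u, v. Qed.

Lemma plusB_cls d (p q : cong_alg Hal) (z : A) :
  plusB Hal d (cls Delta1 p) (cls Delta1 q) =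
  cls Delta1 (eval (cong_alg Hal) (env3 p (diag Hal z) q) d).
Proof.
rewrite /plusB /zeroB -(env3_map (cls Delta1)) (eval_quot Delta_cong).
have [HDrefl _] := Delta_cong.
apply: (cls_eq Delta_cong); apply: (eval_compat Delta_cong).
by apply: env3_rel; [apply: HDrefl | apply: Delta_diag | apply: HDrefl].
Qed.

End PairAlgebra.

Section DifferenceTerm.
Variables (s : signature) (A : algebra s) (d : term s 'I_3).
Hypothesis HdA : is_difference_term A d.
Variables (al : A -> A -> Prop) (Hal : is_congruence A al).
Hypothesis Hcomm : forall x y, tc_comm A al (@total_rel (carrier A)) x y -> x = y.

Local Notation Delta1 := (Delta Hal (@total_rel (carrier A))).

Definition dd (x y z : A) : A := eval A (env3 x y z) d.

Lemma d_id a b : dd a a b = b.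
Proof. by case: (HdA (total_cong A) (I : total_rel a b)). Qed.

(** Since [alpha, alpha] <= [alpha, 1] = 0, also d(y, x, x) = y on
    alpha-classes: d is a Maltsev operation there. *)
Lemma d_right x y : al x y -> dd y x x = y.
Proof.
move=> Hxy; have Hyx : al y x by case: Hal => _ [Hs _]; apply: Hs.
case: (HdA Hal Hyx) => _ Hc; apply: Hcomm.
by apply: tc_comm_mono Hc.
Qed.

Lemma d_shift_al x y x' : al x y -> al x' (dd y x x').
Proof.
move=> Hxy; rewrite -{1}(d_id x x').
by apply: eval_compat => //; case: (Hal) => Halrefl _; apply: env3_rel.
Qed.

Lemma centralizes_eq : centralizes A al (@total_rel (carrier A)) eq.
Proof.
move=> m n t a b c e Ha Hc E; apply: Hcomm => de Hde Hce; apply: Hce => //.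
by rewrite E; case: Hde.
Qed.

Definition D3 V (t1 t2 t3 : term s V) : term s V := tsubst d (env3 t1 t2 t3).

Lemma eval_D3 V (e : V -> A) t1 t2 t3 :
  eval A e (D3 t1 t2 t3) = dd (eval A e t1) (eval A e t2) (eval A e t3).
Proof. by rewrite /D3 eval_subst env3_map. Qed.

(** The term t(u, x, z; c) = d(f(d(u, x, c)), f(c), z) behind the transfer
    identity below; its first block of variables lists u, then x, then z. *)
Definition transfer_env n (u x : 'I_n -> A) (z : A) : 'I_(n + (n + 1)) -> A :=
  fun i => match split i with
           | inl k => u k
           | inr j => match split j with inl k => x k | inr _ => z end
           end.

Definition transfer_term (f : sym s) :
  term s ('I_(arity f + (arity f + 1)) + 'I_(arity f)) :=
  D3 (App f (fun i => D3 (Var (inl (unsplit (inl i))))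
                         (Var (inl (unsplit (inr (unsplit (inl i))))))
                         (Var (inr i))))
     (App f (fun i => Var (inr i)))
     (Var (inl (unsplit (inr (unsplit (inr (ord0 : 'I_1))))))).

Lemma eval_transfer_term f (u x c : 'I_(arity f) -> A) (z : A) :
  eval A (sum_env (transfer_env u x z) c) (transfer_term f) =
  dd (op A f (fun i => dd (u i) (x i) (c i))) (op A f c) z.
Proof.
rewrite /transfer_term eval_D3 /=; congr dd.
- congr (op A f); apply: functional_extensionality => i.
  by rewrite eval_D3 /= /transfer_env !(unsplitK (inl _)) !(unsplitK (inr _)) (unsplitK (inl _)).
- by rewrite /transfer_env /= !(unsplitK (inr _)).
Qed.

(** Apply the term condition to
    transfer_term: replacing u := x by u := y changes nothing when c := x
    versus c := w, since both sides equal z for u := x. *)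
Lemma d_transfer f (x y w : 'I_(arity f) -> A) (z : A) :
  (forall i, al (x i) (y i)) ->
  dd (op A f y) (op A f x) z = dd (op A f (fun i => dd (y i) (x i) (w i))) (op A f w) z.
Proof.
move=> Hxy.
have := centralizes_eq (t := transfer_term f) (a := transfer_env x x z)
  (b := transfer_env y x z) (c := x) (e := w).
rewrite !eval_transfer_term.
have -> : (fun i => dd (y i) (x i) (x i)) = y.
  by apply: functional_extensionality => i; apply: d_right.
have Hid c : (fun i => dd (x i) (x i) (c i)) = c.
  by apply: functional_extensionality => i; apply: d_id.
apply => //; last by rewrite !Hid !d_id.
move=> i; rewrite /transfer_env; case: split => [k|j]; first exact: Hxy.
by case: Hal => Halrefl _; case: split.
Qed.

Definition Rrel (p q : cong_pairs al) : Prop :=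
  forall z, dd (proj1_sig p).2 (proj1_sig p).1 z = dd (proj1_sig q).2 (proj1_sig q).1 z.

(** R is a congruence of A(alpha); compatibility with the operations is the
    transfer identity followed by d(y', x', x') = y'. *)
Lemma Rrel_cong : is_congruence (cong_alg Hal) Rrel.
Proof.
split; [|split; [|split]].
- by move=> x z.
- by move=> x y H z; rewrite H.
- by move=> x y w H1 H2 z; rewrite H1 H2.
- move=> f xs ys H z /=.
  rewrite (@d_transfer f (fun i => (proj1_sig (xs i)).1) (fun i => (proj1_sig (xs i)).2)
             (fun i => (proj1_sig (ys i)).1) z (fun i => proj2_sig (xs i))).
  congr dd; congr (op A f); apply: functional_extensionality => i.
  by rewrite H; apply: d_right; apply: (proj2_sig (ys i)).
Qed.

Lemma Delta_sub_Rrel p q : Delta1 p q -> Rrel p q.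
Proof.
move=> H; apply: H; first exact: Rrel_cong.
by move=> a b [u [v [_ [Ea Eb]]]] z; rewrite Ea Eb /= !d_id.
Qed.

Lemma Delta_shift (p q : cong_pairs al) :
  (proj1_sig q).2 = dd (proj1_sig p).2 (proj1_sig p).1 (proj1_sig q).1 -> Delta1 p q.
Proof.
move=> Eq; set x := (proj1_sig p).1.
have HD := Delta_cong Hal.
have Ep : eval (cong_alg Hal) (env3 p (diag Hal x) (diag Hal x)) d = p.
  apply: sig_eq; rewrite eval_cong3 -!/(dd _ _ _) /= d_id d_right //; last exact: proj2_sig p.
  by rewrite /x; case: (proj1_sig p).
have Eq' : eval (cong_alg Hal) (env3 p (diag Hal x) (diag Hal (proj1_sig q).1)) d = q.
  apply: sig_eq; rewrite eval_cong3 -!/(dd _ _ _) /= d_id -Eq.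
  by case: (proj1_sig q).
rewrite -{1}Ep -Eq'; apply: (eval_compat HD); case: (HD) => HDrefl _.
by apply: env3_rel => //; apply: Delta_diag.
Qed.

Section Isomorphism.
Variables (r : A -> A) (Hr : is_trace A al r).

Local Notation BT := (tensor (plusB Hal d) (T_map Hal Hr)).

Definition trace_pair (a : A) : cong_pairs al :=
  exist (fun p : A * A => al p.1 p.2) (r a, a) (proj1 Hr a).

Definition iso_map (a : A) : BT := (cls Delta1 (trace_pair a), cls al a).

(** T_f is computed on arbitrary representatives, since r is constant on
    alpha-classes. *)
Lemma T_map_cls f (a : 'I_(arity f) -> A) :
  T_map Hal Hr f (fun i => cls al (a i)) =
  cls Delta1 (exist (fun p : A * A => al p.1 p.2)
                (r (op A f a), op A f (fun i => r (a i))) (@T_proof _ _ _ Hal _ Hr f a)).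
Proof.
have [_ [Hs [_ Hc]]] := Hal; have [_ Hr2] := Hr.
congr (cls _ _); apply: sig_eq => /=; congr pair.
- by apply: Hr2; apply: Hc => i; apply: Hs; apply: rep_cls.
- by congr (op A f); apply: functional_extensionality => i; apply: Hr2; apply: Hs; apply: rep_cls.
Qed.

(** h is a homomorphism: computing with the representatives (r a_i, a_i),
    the first coordinate of f(h a) is d((f(r a), f a), (f(r a), f(r a)),
    (r(f a), f(r a))) = (r(f a), f a). *)
Lemma iso_map_hom : is_hom iso_map.
Proof.
move=> f a; have [_ [_ [_ Hc]]] := Hal; have [Hr1 _] := Hr.
have -> : op BT f (fun i => iso_map (a i)) =
    (plusB Hal d (op (B_alg Hal) f (fun i => cls Delta1 (trace_pair (a i))))
                 (T_map Hal Hr f (fun i => cls al (a i))),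
     op (quot_alg A al) f (fun i => cls al (a i))) by [].
rewrite (op_quot Hal) (op_quot (Delta_cong Hal)) T_map_cls.
rewrite (plusB_cls _ _ _ (op A f (fun i => r (a i)))).
congr (cls _ _, _); apply: sig_eq; rewrite eval_cong3 -!/(dd _ _ _) /= d_id.
by rewrite d_right //; apply: Hc => i; apply: Hr1.
Qed.

(** h is injective: if h a = h b then r a = r b, and Delta <= R evaluated
    at z := r a gives a = d(a, r a, r a) = d(b, r b, r b) = b. *)
Lemma iso_map_inj : injective iso_map.
Proof.
move=> a b E; have /(cls_inv (Delta_cong Hal)) /Delta_sub_Rrel HR := f_equal fst E.
have /(cls_inv Hal) Hab := f_equal snd E.
have [Hr1 Hr2] := Hr; have Erab : r a = r b := Hr2 _ _ Hab.
by have := HR (r a); rewrite /= (d_right (Hr1 a)) Erab (d_right (Hr1 b)).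
Qed.

(** h is surjective: for classes of (x, y) and of c, the element
    a := d(y, x, r c) is alpha-related to c and (r a, a) is Delta-related to
    (x, y) by the shift lemma. *)
Lemma iso_map_surj y : exists a, iso_map a = y.
Proof.
case: y => X Q; set p := rep X; set c := rep Q.
have [Hr1 Hr2] := Hr; have [_ [Hs [Ht _]]] := Hal.
set a := dd (proj1_sig p).2 (proj1_sig p).1 (r c).
have Hac : al a c by apply: Ht (Hr1 c); apply: Hs; apply: d_shift_al; apply: (proj2_sig p).
exists a; rewrite /iso_map -(cls_rep X) -(cls_rep Q); congr pair.
- apply: (cls_eq (Delta_cong Hal)); have [_ [HDs _]] := Delta_cong Hal.
  by apply: HDs; apply: Delta_shift; rewrite /= (Hr2 _ _ Hac).
- exact: (cls_eq Hal).
Qed.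

End Isomorphism.

End DifferenceTerm.

Lemma inj_surj_bijective (T U : Type) (h : T -> U) :
  injective h -> (forall y, exists x, h x = y) -> bijective h.
Proof.
move=> inj surj.
pose g y := proj1_sig (constructive_indefinite_description _ (surj y)).
exists g => [x|y]; rewrite /g; case: constructive_indefinite_description => //= z Ez.
exact: inj Ez.
Qed.

Unset Implicit Arguments.
Set Strict Implicit.

Theorem corollary2p5 (s : signature)
  (Sigma : term s nat -> term s nat -> Prop) (d : term s 'I_3)
  (Hd : forall C : algebra s, models C Sigma -> is_difference_term C d)
  (A : algebra s) (HA : models A Sigma)
  (al : A -> A -> Prop) (Hal : is_congruence A al)
  (Hcomm : forall x y, tc_comm A al (@total_rel (carrier A)) x y -> x = y)
  (r : A -> A) (Hr : is_trace A al r) :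
  isomorphic A (tensor (plusB Hal d) (T_map Hal Hr)).
Proof.
have HdA : is_difference_term A d := Hd A HA.
exists (iso_map d Hal Hr); split; first exact: (iso_map_hom HdA Hal Hcomm).
apply: inj_surj_bijective; [exact: (iso_map_inj HdA Hcomm) | exact: (iso_map_surj HdA Hcomm)].
Qed.
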